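(* Let $\mathbb{F}$ be a field of characteristic $2$, $V$ a finite-dimensional $\mathbb{F}$-vector space and $b$ a non-degenerate symmetric bilinear form on $V$. Let $\mathcal{V}$ be a linear subspace of $\mathcal{S}_b$ all of whose elements are nilpotent. Then there exist a perfect field $\mathbb{F}'$ of characteristic $2$, a vector space $V'$ over $\mathbb{F}'$ with $\dim_{\mathbb{F}'} V' = \dim_{\mathbb{F}} V$, a non-degenerate symmetric bilinear form $b'$ on $V'$, and a linear subspace $\mathcal{V}'$ of $\mathcal{S}_{b'}$ all of whose elements are nilpotent, such that $\dim_{\mathbb{F}'} \mathcal{V}' = \dim_{\mathbb{F}} \mathcal{V}$.
   Context: For a symmetric bilinear form $c$ on a space $W$, $\mathcal{S}_c$ is the space of endomorphisms $u$ of $W$ for which $(x,y)\mapsto c(x,u(y))$ is symmetric. A field of characteristic $2$ is perfect if $x\mapsto x^2$ is surjective on it. *)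

From HB Require Import structures.
From mathcomp Require Import all_boot all_order all_algebra.
Set Implicit Arguments. Unset Strict Implicit. Unset Printing Implicit Defensive.
Import GRing.Theory.
Local Open Scope ring_scope.

Definition is_bilin_form (F : fieldType) (V : vectType F) (b : V -> V -> F) : Prop :=
  (forall (a : F) (x y z : V), b (a *: x + y) z = a * b x z + b y z) /\
  (forall (a : F) (x y z : V), b x (a *: y + z) = a * b x y + b x z).

Definition sym_bform (F : fieldType) (V : vectType F) (b : V -> V -> F) : Prop :=
  forall x y : V, b x y = b y x.

Definition nondeg_bform (F : fieldType) (V : vectType F) (b : V -> V -> F) : Prop :=
  forall x : V, (forall y : V, b x y = 0) -> x = 0.

Definition in_S (F : fieldType) (V : vectType F) (c : V -> V -> F) (u : 'End(V)) : Prop :=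
  forall x y : V, c x (u y) = c y (u x).

Definition nilpotent_end (F : fieldType) (V : vectType F) (u : 'End(V)) : Prop :=
  exists k : nat, forall x : V, iter k u x = 0.

Definition perfect_char2 (F : fieldType) : Prop :=
  (2%N \in [pchar F]) /\ forall x : F, exists y : F, y ^+ 2 = x.

From HB Require Import structures.
From mathcomp Require Import all_boot all_order all_algebra zify generic_quotient.
From Stdlib Require Import Classical.
Set Implicit Arguments. Unset Strict Implicit. Unset Printing Implicit Defensive.
Import GRing.Theory passmx.
Local Open Scope quotient_scope.
Local Open Scope ring_scope.

(* If F is perfect there is nothing to do.  Otherwise F is infinite, since the
   Frobenius map is injective and hence bijective on a finite field, and we
   take F' to be the perfect closure of F.  In a basis of V, b becomes a
   symmetric invertible Gram matrix B and a basis of W becomes linearly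
   independent matrices U_i with B U_i^T = U_i B, all of whose linear
   combinations are nilpotent of exponent dim V.  Every condition but the last
   survives any field embedding; the last one is a polynomial identity in the
   coefficients of the combination, which holds on F^d and hence, F being
   infinite, on F'^d.  Reading the matrices back as a bilinear form and
   endomorphisms of F'^n gives the data sought. *)

(** * The perfect closure *)

Section PerfectClosure.
Variables (F : fieldType) (p : nat).
Hypothesis pcharFp : p \in [pchar F].
Implicit Types (x y : F) (a b : F * nat).

Definition frobn n (x : F) := x ^+ (p ^ n).

Lemma frobn_is_nmod_morphism n : nmod_morphism (frobn n).
Proof.
have pnat_pn : [pchar F].-nat (p ^ n)%N.
  rewrite pnatX (eq_pnat _ (pcharf_eq pcharFp)).
  by rewrite pnat_id ?(pcharf_prime pcharFp).
split=> [|x y]; rewrite /frobn.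
  by rewrite expr0n expn_eq0 eqn0Ngt prime_gt0 ?(pcharf_prime pcharFp).
exact: exprDn_pchar.
Qed.
HB.instance Definition _ n :=
  GRing.isNmodMorphism.Build F F (frobn n) (frobn_is_nmod_morphism n).

Lemma frobn_is_monoid_morphism n : monoid_morphism (frobn n).
Proof. by split=> [|x y]; rewrite /frobn ?expr1n ?exprMn. Qed.
HB.instance Definition _ n :=
  GRing.isMonoidMorphism.Build F F (frobn n) (frobn_is_monoid_morphism n).

Lemma frobn_frobn m n x : frobn m (frobn n x) = frobn (n + m) x.
Proof. by rewrite /frobn -exprM expnD. Qed.

Lemma frobn_inj n : injective (frobn n).
Proof. exact: fmorph_inj. Qed.

(* The pair (x, n) stands for the p^n-th root of x; at_level N a is the
   p^N-th power of that root, an element of F as long as a.2 <= N. *)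
Definition at_level N (a : F * nat) := frobn (N - a.2) a.1.

Definition pc_eq (a b : F * nat) := frobn b.2 a.1 == frobn a.2 b.1.

Lemma pc_eqE N a b :
  (a.2 + b.2 <= N)%N -> pc_eq a b = (at_level N a == at_level N b).
Proof.
move=> le_ab_N; rewrite /at_level.
have -> : (N - a.2 = b.2 + (N - a.2 - b.2))%N by lia.
have -> : (N - b.2 = a.2 + (N - a.2 - b.2))%N by lia.
by rewrite -!frobn_frobn (inj_eq (@frobn_inj _)).
Qed.

Lemma pc_eq_refl : reflexive pc_eq.
Proof. by move=> a; rewrite /pc_eq. Qed.

Lemma pc_eq_sym : symmetric pc_eq.
Proof. by move=> a b; rewrite /pc_eq eq_sym. Qed.

Lemma pc_eq_trans : transitive pc_eq.
Proof.
move=> b a c; set N := (a.2 + b.2 + c.2)%N.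
by rewrite !(pc_eqE (N := N)) ?/N; [move=> /eqP -> | lia..].
Qed.

Canonical pc_eq_equiv := EquivRel pc_eq pc_eq_refl pc_eq_sym pc_eq_trans.
Definition perfect_closure := {eq_quot pc_eq}.
HB.instance Definition _ : EqQuotient _ pc_eq perfect_closure :=
  EqQuotient.on perfect_closure.
HB.instance Definition _ := Choice.on perfect_closure.
Local Notation pc := perfect_closure.

Lemma eq_pi_pc_at_level N a b : (a.2 + b.2 <= N)%N ->
  at_level N a = at_level N b -> \pi_pc a = \pi_pc b.
Proof.
by move=> le_ab_N eq_ab; apply/eqmodP; rewrite /= (pc_eqE le_ab_N) eq_ab.
Qed.

Section CompatibleOperations.
Variables (op1 : F * nat -> F * nat) (g1 : F -> F).
Hypothesis at_level_op1 : forall N a, at_level N (op1 a) = g1 (at_level N a).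
Hypothesis op1_level : forall a, (op1 a).2 = a.2.

Lemma pc_eq_op1 a a' : pc_eq a a' -> pc_eq (op1 a) (op1 a').
Proof.
set N := (a.2 + a'.2)%N.
rewrite !(pc_eqE (N := N)) ?op1_level ?at_level_op1 /N; try lia.
by move=> /eqP ->.
Qed.

Variables (op2 : F * nat -> F * nat -> F * nat) (g2 : F -> F -> F).
Hypothesis at_level_op2 : forall N a b, (a.2 + b.2 <= N)%N ->
  at_level N (op2 a b) = g2 (at_level N a) (at_level N b).
Hypothesis op2_level : forall a b, (op2 a b).2 = (a.2 + b.2)%N.

Lemma pc_eq_op2 a a' b b' :
  pc_eq a a' -> pc_eq b b' -> pc_eq (op2 a b) (op2 a' b').
Proof.
set N := (2 * (a.2 + a'.2 + b.2 + b'.2))%N.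
rewrite !(pc_eqE (N := N)) ?op2_level ?at_level_op2 /N; try lia.
by move=> /eqP -> /eqP ->.
Qed.

End CompatibleOperations.

Definition rep_add a b := (frobn b.2 a.1 + frobn a.2 b.1, (a.2 + b.2)%N).
Definition rep_mul a b := (frobn b.2 a.1 * frobn a.2 b.1, (a.2 + b.2)%N).
Definition rep_opp a := (- a.1, a.2).
Definition rep_inv a := (a.1^-1, a.2).

Lemma at_level_add N a b : (a.2 + b.2 <= N)%N ->
  at_level N (rep_add a b) = at_level N a + at_level N b.
Proof.
move=> le_N; rewrite /at_level /= rmorphD /= !frobn_frobn.
by congr (frobn _ _ + frobn _ _); lia.
Qed.

Lemma at_level_mul N a b : (a.2 + b.2 <= N)%N ->
  at_level N (rep_mul a b) = at_level N a * at_level N b.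
Proof.
move=> le_N; rewrite /at_level /= rmorphM /= !frobn_frobn.
by congr (frobn _ _ * frobn _ _); lia.
Qed.

Lemma at_level_opp N a : at_level N (rep_opp a) = - at_level N a.
Proof. exact: rmorphN. Qed.

Lemma at_level_inv N a : at_level N (rep_inv a) = (at_level N a)^-1.
Proof. exact: fmorphV. Qed.

Lemma pc_eq_repr a : pc_eq a (repr (\pi_pc a)).
Proof. by rewrite -eqmodE reprK. Qed.

Definition pc_add := lift_op2 pc rep_add.
Lemma pi_pc_add : {morph \pi : a b / rep_add a b >-> pc_add a b}.
Proof.
move=> a b; unlock pc_add; apply/eqmodP/(pc_eq_op2 at_level_add) => //.
all: exact: pc_eq_repr.
Qed.
Canonical pi_pc_add_morph := PiMorph2 pi_pc_add.

Definition pc_mul := lift_op2 pc rep_mul.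
Lemma pi_pc_mul : {morph \pi : a b / rep_mul a b >-> pc_mul a b}.
Proof.
move=> a b; unlock pc_mul; apply/eqmodP/(pc_eq_op2 at_level_mul) => //.
all: exact: pc_eq_repr.
Qed.
Canonical pi_pc_mul_morph := PiMorph2 pi_pc_mul.

Definition pc_opp := lift_op1 pc rep_opp.
Lemma pi_pc_opp : {morph \pi : a / rep_opp a >-> pc_opp a}.
Proof.
move=> a; unlock pc_opp; apply/eqmodP/(pc_eq_op1 at_level_opp) => //.
exact: pc_eq_repr.
Qed.
Canonical pi_pc_opp_morph := PiMorph1 pi_pc_opp.

Definition pc_inv := lift_op1 pc rep_inv.
Lemma pi_pc_inv : {morph \pi : a / rep_inv a >-> pc_inv a}.
Proof.
move=> a; unlock pc_inv; apply/eqmodP/(pc_eq_op1 at_level_inv) => //.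
exact: pc_eq_repr.
Qed.
Canonical pi_pc_inv_morph := PiMorph1 pi_pc_inv.

Definition pc_zero : pc := \pi_pc (0, 0%N).
Definition pc_one : pc := \pi_pc (1, 0%N).

Lemma at_level_const N x : at_level N (x, 0%N) = frobn N x.
Proof. by rewrite /at_level subn0. Qed.

Ltac pc_at_level N :=
  apply: (eq_pi_pc_at_level (N := N)); rewrite /= ?(at_level_add, at_level_mul,
    at_level_opp, at_level_inv, at_level_const) /=; try lia.

Lemma pc_addA : associative pc_add.
Proof.
elim/quotW=> a; elim/quotW=> b; elim/quotW=> c; rewrite !piE.
by pc_at_level (2 * (a.2 + b.2 + c.2))%N; rewrite addrA.
Qed.

Lemma pc_addC : commutative pc_add.
Proof.
elim/quotW=> a; elim/quotW=> b; rewrite !piE.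
by pc_at_level (2 * (a.2 + b.2))%N; rewrite addrC.
Qed.

Lemma pc_add0 : left_id pc_zero pc_add.
Proof.
elim/quotW=> a; rewrite !piE.
by pc_at_level (2 * a.2)%N; rewrite rmorph0 add0r.
Qed.

Lemma pc_addN : left_inverse pc_zero pc_opp pc_add.
Proof.
elim/quotW=> a; rewrite !piE.
by pc_at_level (2 * a.2)%N; rewrite rmorph0 addNr.
Qed.

HB.instance Definition _ :=
  GRing.isZmodule.Build pc pc_addA pc_addC pc_add0 pc_addN.

Lemma pc_mulA : associative pc_mul.
Proof.
elim/quotW=> a; elim/quotW=> b; elim/quotW=> c; rewrite !piE.
by pc_at_level (2 * (a.2 + b.2 + c.2))%N; rewrite mulrA.
Qed.

Lemma pc_mulC : commutative pc_mul.
Proof.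
elim/quotW=> a; elim/quotW=> b; rewrite !piE.
by pc_at_level (2 * (a.2 + b.2))%N; rewrite mulrC.
Qed.

Lemma pc_mul1 : left_id pc_one pc_mul.
Proof.
elim/quotW=> a; rewrite !piE.
by pc_at_level (2 * a.2)%N; rewrite rmorph1 mul1r.
Qed.

Lemma pc_mulDl : left_distributive pc_mul pc_add.
Proof.
elim/quotW=> a; elim/quotW=> b; elim/quotW=> c; rewrite !piE.
by pc_at_level (3 * (a.2 + b.2 + c.2))%N; rewrite mulrDl.
Qed.

Lemma pc_one_neq0 : pc_one != pc_zero.
Proof.
apply/negP => /eqP /eqmodP.
by rewrite /= /pc_eq /= !rmorph0 rmorph1 (negbTE (oner_neq0 _)).
Qed.

HB.instance Definition _ :=
  GRing.Zmodule_isComNzRing.Build pc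
    pc_mulA pc_mulC pc_mul1 pc_mulDl pc_one_neq0.

Lemma pc_mulV : forall a : pc, a != 0 -> pc_mul (pc_inv a) a = 1.
Proof.
elim/quotW=> a a_neq0; rewrite !piE.
have a1_neq0 : a.1 != 0.
  apply: contra a_neq0 => /eqP a1_eq0; apply/eqP.
  by pc_at_level a.2; rewrite /at_level a1_eq0 !rmorph0.
by pc_at_level (2 * a.2)%N; rewrite mulVf ?rmorph1 // fmorph_eq0.
Qed.

Lemma pc_inv0 : pc_inv 0 = 0.
Proof. by rewrite !piE; pc_at_level 0%N; rewrite invr0. Qed.

HB.instance Definition _ := GRing.ComNzRing_isField.Build pc pc_mulV pc_inv0.

Definition pc_embed x : pc := \pi_pc (x, 0%N).

Lemma pc_embed_is_nmod_morphism : nmod_morphism pc_embed.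
Proof.
split=> // x y; rewrite /pc_embed piE.
by pc_at_level 0%N; rewrite rmorphD.
Qed.
HB.instance Definition _ :=
  GRing.isNmodMorphism.Build F pc pc_embed pc_embed_is_nmod_morphism.

Lemma pc_embed_is_monoid_morphism : monoid_morphism pc_embed.
Proof.
split=> // x y; rewrite /pc_embed piE.
by pc_at_level 0%N; rewrite rmorphM.
Qed.
HB.instance Definition _ :=
  GRing.isMonoidMorphism.Build F pc pc_embed pc_embed_is_monoid_morphism.

Lemma pchar_perfect_closure : p \in [pchar pc].
Proof. exact: (rmorph_pchar pc_embed pcharFp). Qed.

Lemma pi_exprn x n k : (\pi_pc (x, n)) ^+ k = \pi_pc (x ^+ k, n).
Proof.
elim: k => [|k IHk].
  by rewrite !expr0; pc_at_level n; rewrite /at_level !rmorph1.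
rewrite exprSr IHk piE.
by pc_at_level (3 * n)%N; rewrite /at_level -rmorphM exprSr.
Qed.

Lemma perfect_closure_pth_root (a : pc) : exists b : pc, b ^+ p = a.
Proof.
elim/quotW: a => a; exists (\pi_pc (a.1, a.2.+1)); rewrite pi_exprn.
pc_at_level (2 * a.2.+1)%N.
have frobn1 y : y ^+ p = frobn 1 y by rewrite /frobn expn1.
by rewrite frobn1 /at_level /= frobn_frobn; congr frobn; lia.
Qed.

End PerfectClosure.

Lemma inj_surj_of_cover (T : eqType) (g : T -> T) (s : seq T) :
  injective g -> (forall x, x \in s) -> forall x, exists y, g y = x.
Proof.
move=> g_inj s_full x.
have gs_uniq : uniq (map g (undup s)).
  by rewrite (map_inj_uniq g_inj) undup_uniq.
have gs_sub : {subset map g (undup s) <= undup s}.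
  by move=> y _; rewrite mem_undup s_full.
have [_ /(_ x)] := uniq_min_size gs_uniq gs_sub (eq_leq (esym (size_map g _))).
by rewrite mem_undup s_full => /mapP[y _ ->]; exists y.
Qed.

Lemma finite_field_perfect (F : fieldType) p (s : seq F) :
    p \in [pchar F] -> (forall x, x \in s) ->
  forall x : F, exists y : F, y ^+ p = x.
Proof.
move=> pcharFp; apply: inj_surj_of_cover.
exact: fmorph_inj (pFrobenius_aut pcharFp).
Qed.

Lemma seq_finite_or_infinite (T : eqType) :
  (exists s : seq T, forall x, x \in s) \/
  (forall s : seq T, exists x, x \notin s).
Proof.
have [|T_not_finite] := classic (exists s : seq T, forall x, x \in s).
  by left.
right=> s; apply: NNPP => no_x_notin_s; apply: T_not_finite; exists s => x.
by apply/negPn/negP => x_notin_s; apply: no_x_notin_s; exists x.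
Qed.

(** * Extension of scalars *)

Lemma mx_nilpotent_dim (K : fieldType) n (A : 'M[K]_n) k :
  A ^+ k = 0 -> A ^+ n = 0.
Proof.
case: n A => [|n] A Ak0; first by rewrite flatmx0.
have /dvdp_exp_XsubCP[j _ minpoly_Xj] : mxminpoly A %| ('X - 0%:P) ^+ k.
  by apply/mxminpoly_minP; rewrite subr0 rmorphXn /= horner_mx_X.
have Aj0 : A ^+ j = 0.
  apply/eqP; rewrite -(horner_mx_X A) -rmorphXn /= -dvd_mxminpoly.
  by rewrite (eqp_dvdl _ minpoly_Xj) subr0 dvdpp.
have le_jn : (j <= n.+1)%N.
  have := eqp_size minpoly_Xj.
  rewrite subr0 size_polyXn size_mxminpoly => -[<-].
  have := dvdp_leq _ (mxminpoly_dvd_char A).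
  rewrite size_char_poly size_mxminpoly.
  by apply; rewrite -size_poly_eq0 size_char_poly.
by rewrite -[X in _ ^+ X](subnK le_jn) exprD Aj0 mulr0.
Qed.

Lemma free_mxvec_rows (K : fieldType) m n d (U : d.-tuple 'M[K]_(m, n)) :
  free U = row_free (\matrix_(i < d) mxvec U`_i).
Proof.
set M := \matrix_(i < d) mxvec U`_i.
have mxvec_sum (k : 'I_d -> K) : mxvec (\sum_i k i *: U`_i) = \row_i k i *m M.
  rewrite mulmx_sum_row linear_sum; apply: eq_bigr => i _.
  by rewrite linearZ rowK mxE.
apply/freeP/idP => [U_free | M_free k Uk0 i].
  apply: inj_row_free => v vM0; apply/rowP => i; rewrite mxE.
  apply: (U_free (fun j => v 0 j)); apply: (can_inj mxvecK).
  rewrite mxvec_sum linear0 -vM0; congr (_ *m _).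
  by apply/rowP => j; rewrite mxE.
have /(row_free_inj M_free)/rowP/(_ i) : \row_i k i *m M = 0 *m M.
  by rewrite -mxvec_sum Uk0 linear0 mul0mx.
by rewrite !mxE.
Qed.

Lemma free_map_mx (R K : fieldType) (f : {rmorphism R -> K}) m n d
    (U : d.-tuple 'M[R]_(m, n)) :
  free U -> free (map_tuple (map_mx f) U).
Proof.
rewrite !free_mxvec_rows -(row_free_map f); congr row_free.
apply/matrixP => i j; rewrite !mxE (nth_map 0) ?size_tuple //.
by rewrite -map_mxvec mxE.
Qed.

Lemma free_map_inj (K : fieldType) (aT rT : vectType K) (h : {linear aT -> rT})
    d (X : d.-tuple aT) :
  injective h -> free X -> free (map_tuple h X).
Proof.
move=> h_inj /freeP X_free; apply/freeP => k hXk0; apply: X_free.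
apply: h_inj; rewrite linear0 -[RHS]hXk0 linear_sum; apply: eq_bigr => i _.
by rewrite linearZ (nth_map 0) ?size_tuple.
Qed.

Section InfiniteBaseChange.
Variables (R K : fieldType) (f : {rmorphism R -> K}).
Hypothesis R_infinite : forall s : seq R, exists x, x \notin s.

Lemma exists_uniq_seq m : exists2 s : seq R, uniq s & size s = m.
Proof.
elim: m => [|m [s s_uniq <-]]; first by exists [::].
by have [x x_notin_s] := R_infinite s; exists (x :: s); rewrite /= ?x_notin_s.
Qed.

Lemma poly_eq0_on_image (q : {poly K}) : (forall r, q.[f r] = 0) -> q = 0.
Proof.
move=> q_vanish; have [s s_uniq s_size] := exists_uniq_seq (size q).
apply: (@roots_geq_poly_eq0 _ _ (map f s)).
- by apply/allP => _ /mapP[r _ ->]; apply/eqP/q_vanish.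
- by rewrite (map_inj_uniq (fmorph_inj f)).
- by rewrite size_map s_size.
Qed.

Lemma pencil_exp_eq0 n N (A B : 'M[K]_n) :
  (forall r, (A + f r *: B) ^+ N = 0) -> forall t, (A + t *: B) ^+ N = 0.
Proof.
move=> AB_nil t.
pose Q := (map_mx polyC A + 'X *: map_mx polyC B) ^+ N.
have evalQ u : map_mx (horner_eval u) Q = (A + u *: B) ^+ N.
  have evalC M : map_mx (horner_eval u) (map_mx polyC M) = M.
    by apply/matrixP => i j; rewrite !mxE horner_evalE hornerC.
  by rewrite rmorphXn rmorphD /= map_mxZ /= horner_evalE hornerX !evalC.
have Q0 : Q = 0.
  apply/matrixP => i j; rewrite mxE; apply: poly_eq0_on_image => r.
  by have /matrixP/(_ i j) := evalQ (f r); rewrite AB_nil !mxE horner_evalE.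
by rewrite -evalQ Q0 map_mx0.
Qed.

Lemma affine_span_exp_eq0 n N d (U0 : 'M[R]_n) (U : 'I_d -> 'M[R]_n) :
    (forall c : 'I_d -> R, (U0 + \sum_i c i *: U i) ^+ N = 0) ->
  forall c : 'I_d -> K, (map_mx f U0 + \sum_i c i *: map_mx f (U i)) ^+ N = 0.
Proof.
elim: d U0 U => [|d IHd] U0 U U_nil c.
  have := U_nil (fun _ => 0); rewrite !big_ord0 !addr0 => U0_nil.
  by rewrite -rmorphXn U0_nil rmorph0.
(* Fixing the first coefficient at f r folds it into the offset; it is then
   freed by pencil_exp_eq0. *)
rewrite big_ord_recl addrCA addrC; apply: pencil_exp_eq0 => r.
rewrite addrAC -map_mxZ -rmorphD.
apply: (IHd _ (fun i => U (lift ord0 i))) => c'; rewrite -addrA.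
have := U_nil (fun i => if unlift ord0 i is Some j then c' j else r).
by rewrite big_ord_recl unlift_none; under eq_bigr do rewrite liftK.
Qed.

End InfiniteBaseChange.

(** * Forms and endomorphisms as matrices *)

Section MatrixForm.
Variables (K : fieldType) (n : nat).
Implicit Types (B M : 'M[K]_n) (x y : 'rV[K]_n).

Definition mxform B x y := (x *m B *m y^T) 0 0.

Lemma mxformC B x y : mxform B x y = mxform B^T y x.
Proof.
transitivity ((x *m B *m y^T)^T 0 0); first by rewrite mxE.
by rewrite !trmx_mul trmxK mulmxA.
Qed.

Lemma mxform_delta B (i j : 'I_n) M M' :
  mxform B (delta_mx 0 i *m M) (delta_mx 0 j *m M') = (M *m B *m M'^T) i j.
Proof.
by rewrite /mxform trmx_mul trmx_delta !mulmxA -rowE -!row_mul -colE !mxE.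
Qed.

Lemma mxform_bilin B : is_bilin_form (mxform B).
Proof.
split=> a x y z; rewrite /mxform.
  by rewrite !mulmxDl -!scalemxAl !mxE.
by rewrite linearD linearZ /= mulmxDr -scalemxAr !mxE.
Qed.

Lemma mxform_sym B : B^T = B -> sym_bform (mxform B).
Proof. by move=> B_sym x y; rewrite mxformC B_sym. Qed.

Lemma mxform_nondeg B : B \in unitmx -> nondeg_bform (mxform B).
Proof.
move=> B_unit x x_orth; rewrite -(mulmxK B_unit x).
suff -> : x *m B = 0 by rewrite mul0mx.
apply/rowP => j; rewrite [RHS]mxE -(x_orth (delta_mx 0 j)).
by rewrite /mxform trmx_delta -colE !mxE.
Qed.

Definition mxend M : 'End('rV[K]_n) := linfun (mulmxr M).

Lemma mxendE M x : mxend M x = x *m M.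
Proof. by rewrite lfunE. Qed.

Lemma mxend_is_linear : linear mxend.
Proof.
move=> a M M'; apply/lfunP => x.
by rewrite add_lfunE scale_lfunE !mxendE mulmxDr scalemxAr.
Qed.
HB.instance Definition _ := GRing.isSemilinear.Build K 'M[K]_n 'End('rV[K]_n) _
  mxend (GRing.semilinear_linear mxend_is_linear).

Lemma mxend_inj : injective mxend.
Proof.
move=> M M' eq_MM'; apply/row_matrixP => i.
by rewrite !rowE -!mxendE eq_MM'.
Qed.

Lemma mxend_in_S B M :
  B^T = B -> B *m M^T = M *m B -> in_S (mxform B) (mxend M).
Proof.
move=> B_sym BM_sym x y; rewrite !mxendE mxformC B_sym /mxform.
by rewrite trmx_mul !mulmxA -[y *m B *m _]mulmxA BM_sym !mulmxA.
Qed.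

Lemma iter_mxend M k x : iter k (mxend M) x = x *m M ^+ k.
Proof.
elim: k => [|k IHk]; first by rewrite mulmx1.
by rewrite iterS IHk mxendE exprSr mulmxA.
Qed.

Lemma mxend_nilpotent M k : M ^+ k = 0 -> nilpotent_end (mxend M).
Proof. by move=> Mk0; exists k => x; rewrite iter_mxend Mk0 mulmx0. Qed.

End MatrixForm.

Section BilinearForm.
Variables (F : fieldType) (V : vectType F) (b : V -> V -> F).
Hypothesis b_bilin : is_bilin_form b.

Lemma bilin_suml I (r : seq I) (c : I -> F) (x : I -> V) z :
  b (\sum_(i <- r) c i *: x i) z = \sum_(i <- r) c i * b (x i) z.
Proof.
have b0z : b 0 z = 0.
  have := b_bilin.1 1 0 0 z; rewrite scaler0 addr0 mul1r.
  by move/(congr1 (fun t => t - b 0 z)); rewrite addrK subrr.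
by elim/big_rec2: _ => // i s t _ <-; exact: b_bilin.1.
Qed.

Lemma bilin_sumr I (r : seq I) (c : I -> F) (y : I -> V) z :
  b z (\sum_(i <- r) c i *: y i) = \sum_(i <- r) c i * b z (y i).
Proof.
have bz0 : b z 0 = 0.
  have := b_bilin.2 1 z 0 0; rewrite scaler0 addr0 mul1r.
  by move/(congr1 (fun t => t - b z 0)); rewrite addrK subrr.
by elim/big_rec2: _ => // i s t _ <-; exact: b_bilin.2.
Qed.

Local Notation n := (\dim {:V}).
Variables (e : n.-tuple V) (e_basis : basis_of {:V} e).

Definition gram_mx : 'M[F]_n := \matrix_(i, j) b e`_i e`_j.

Lemma gram_mxE x y : b x y = mxform gram_mx (rVof e x) (rVof e y).
Proof.
transitivity (\sum_i \sum_j coord e i x * coord e j y * b e`_i e`_j).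
  rewrite {1}(coord_basis e_basis (memvf x)) bilin_suml; apply: eq_bigr => i _.
  rewrite {1}(coord_basis e_basis (memvf y)) bilin_sumr mulr_sumr.
  by apply: eq_bigr => j _; rewrite mulrA.
rewrite /mxform mxE exchange_big; apply: eq_bigr => j _.
rewrite !mxE mulr_suml; apply: eq_bigr => i _.
by rewrite !mxE mulrAC.
Qed.

Lemma gram_mx_sym : sym_bform b -> gram_mx^T = gram_mx.
Proof. by move=> b_sym; apply/matrixP => i j; rewrite !mxE b_sym. Qed.

Lemma gram_mx_unit : nondeg_bform b -> gram_mx \in unitmx.
Proof.
move=> b_nondeg; rewrite -row_free_unit; apply: inj_row_free => v vG0.
have : vecof e v = 0.
  apply: b_nondeg => y.
  by rewrite gram_mxE (vecofK e_basis) /mxform vG0 !mul0mx mxE.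
by move/(congr1 (rVof e)); rewrite (vecofK e_basis) linear0.
Qed.

Lemma rVof_basis_mul (k : 'I_n) (u : 'End(V)) :
  rVof e (u e`_k) = delta_mx 0 k *m mxof e e u.
Proof. by rewrite (rVof_app e e_basis) (rVofE e_basis). Qed.

Lemma gram_mx_selfadjoint (u : 'End(V)) :
  sym_bform b -> in_S b u -> gram_mx *m (mxof e e u)^T = mxof e e u *m gram_mx.
Proof.
move=> b_sym u_in_S; apply/matrixP => i j.
have := u_in_S e`_i e`_j; rewrite [RHS]b_sym !gram_mxE !rVof_basis_mul.
have rVof_e (k : 'I_n) : rVof e e`_k = delta_mx 0 k *m 1%:M.
  by rewrite mulmx1 (rVofE e_basis).
by rewrite !rVof_e !mxform_delta trmx1 mul1mx mulmx1.
Qed.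

Lemma mxof_nilpotent (u : 'End(V)) : nilpotent_end u -> mxof e e u ^+ n = 0.
Proof.
move=> [k u_nil]; apply: (@mx_nilpotent_dim _ _ _ k); apply/row_matrixP => i.
have rVof_iter x : rVof e (iter k u x) = rVof e x *m mxof e e u ^+ k.
  elim: k {u_nil} => [|k IHk]; first by rewrite mulmx1.
  by rewrite iterS (rVof_app e e_basis) IHk exprSr mulmxA.
by rewrite row0 rowE -(rVofE e_basis) -rVof_iter u_nil linear0.
Qed.

End BilinearForm.

(* With b x y = x *m B *m y^T and u y = y *m M, the endomorphism u is in S_b
   exactly when B *m M^T = M *m B. *)
Definition nil_selfadjoint_family (K : fieldType) n d
    (B : 'M[K]_n) (U : d.-tuple 'M[K]_n) :=
  [/\ B^T = B, B \in unitmx, forall i : 'I_d, B *m (U`_i)^T = U`_i *m B,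
      free U & forall c : 'I_d -> K, (\sum_i c i *: U`_i) ^+ n = 0].

Lemma nil_selfadjoint_family_of_space (F : fieldType) (V : vectType F)
    (b : V -> V -> F) (W : {vspace 'End(V)}) (e := vbasis {:V}) :
    is_bilin_form b -> sym_bform b -> nondeg_bform b ->
    (forall u, u \in W -> in_S b u /\ nilpotent_end u) ->
  nil_selfadjoint_family (gram_mx b e) (map_tuple (mxof e e) (vbasis W)).
Proof.
move=> b_bilin b_sym b_nondeg W_nil_S; have e_basis := vbasisP {:V}.
have mxof_inj : injective (mxof e e) := can_inj (mxofK e_basis e_basis).
have basis_in_W (i : 'I_(\dim W)) : (vbasis W)`_i \in W.
  by apply/vbasis_mem/mem_nth; rewrite size_tuple.
split.
- exact: gram_mx_sym.
- exact: gram_mx_unit.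
- move=> i; rewrite (nth_map 0) ?size_tuple //.
  exact/gram_mx_selfadjoint/(W_nil_S _ (basis_in_W i)).1.
- exact: free_map_inj mxof_inj (basis_free (vbasisP W)).
- move=> c; set u := \sum_i c i *: (vbasis W)`_i.
  have -> : \sum_i c i *: (map_tuple (mxof e e) (vbasis W))`_i = mxof e e u.
    rewrite linear_sum; apply: eq_bigr => i _.
    by rewrite linearZ (nth_map 0) ?size_tuple.
  apply/(mxof_nilpotent e_basis)/(W_nil_S u _).2.
  by apply: memv_suml => i _; apply/memvZ/basis_in_W.
Qed.

Lemma nil_selfadjoint_family_map (R K : fieldType) (f : {rmorphism R -> K}) n d
    (B : 'M[R]_n) (U : d.-tuple 'M[R]_n) :
    (forall s : seq R, exists x, x \notin s) ->
    nil_selfadjoint_family B U ->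
  nil_selfadjoint_family (map_mx f B) (map_tuple (map_mx f) U).
Proof.
move=> R_infinite [B_sym B_unit BU_sym U_free U_nil].
have fU_nth (i : 'I_d) : (map_tuple (map_mx f) U)`_i = map_mx f U`_i.
  by rewrite (nth_map 0) ?size_tuple.
split.
- by rewrite map_trmx B_sym.
- by rewrite map_unitmx.
- by move=> i; rewrite fU_nth map_trmx -!map_mxM BU_sym.
- exact: free_map_mx.
- move=> c; under eq_bigr do rewrite fU_nth.
  have := @affine_span_exp_eq0 _ _ f R_infinite n n d 0 (fun i => U`_i).
  by rewrite map_mx0 -[X in X ^+ _]add0r; apply=> c'; rewrite add0r.
Qed.

Lemma space_of_nil_selfadjoint_family (K : fieldType) n d
    (B : 'M[K]_n) (U : d.-tuple 'M[K]_n) :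
    nil_selfadjoint_family B U ->
  exists (V : vectType K) (b : V -> V -> K) (W : {vspace 'End(V)}),
    [/\ \dim {:V} = n, [/\ is_bilin_form b, sym_bform b & nondeg_bform b],
        (forall u, u \in W -> in_S b u /\ nilpotent_end u) & \dim W = d].
Proof.
move=> [B_sym B_unit BU_sym U_free U_nil].
set X := map_tuple (@mxend K n) U.
exists 'rV[K]_n, (mxform B), <<X>>%VS; split.
- by rewrite dimvf; exact: mul1n.
- by split; [exact: mxform_bilin | exact: mxform_sym | exact: mxform_nondeg].
- move=> u /coord_span ->; set c := fun i => coord X i u.
  have -> : \sum_i c i *: X`_i = mxend (\sum_i c i *: U`_i).
    rewrite linear_sum; apply: eq_bigr => i _.
    by rewrite linearZ (nth_map 0) ?size_tuple.
  split; last exact: mxend_nilpotent (U_nil c).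
  apply: mxend_in_S => //; rewrite linear_sum mulmx_sumr mulmx_suml.
  by apply: eq_bigr => i _; rewrite linearZ -scalemxAr BU_sym scalemxAl.
- have := free_map_inj (@mxend_inj K n) U_free.
  by rewrite /free size_tuple => /eqP.
Qed.

Theorem lemma7p2 (F : fieldType) (V : vectType F) (b : V -> V -> F)
  (W : {vspace 'End(V)}) :
  (2%N \in [pchar F]) ->
  is_bilin_form b -> sym_bform b -> nondeg_bform b ->
  (forall u : 'End(V), u \in W -> in_S b u /\ nilpotent_end u) ->
  exists (F' : fieldType) (V' : vectType F') (b' : V' -> V' -> F')
         (W' : {vspace 'End(V')}),
    [/\ perfect_char2 F',
        \dim (fullv : {vspace V'}) = \dim (fullv : {vspace V}),
        [/\ is_bilin_form b', sym_bform b' & nondeg_bform b'],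
        (forall u : 'End(V'), u \in W' -> in_S b' u /\ nilpotent_end u) &
        \dim W' = \dim W].
Proof.
move=> pcharF2 b_bilin b_sym b_nondeg W_nil_S.
have [[s F_finite] | F_infinite] := seq_finite_or_infinite F.
  exists F, V, b, W; split=> //.
  by split=> // x; exact: finite_field_perfect F_finite x.
have family := nil_selfadjoint_family_of_space b_bilin b_sym b_nondeg W_nil_S.
have [V' [b' [W' [dimV' b'_form W'_nil_S dimW']]]] :=
  space_of_nil_selfadjoint_family
    (nil_selfadjoint_family_map (pc_embed pcharF2) F_infinite family).
exists (perfect_closure pcharF2), V', b', W'; split=> //.
by split; [exact: pchar_perfect_closure | exact: perfect_closure_pth_root].
Qed.
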